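(* In Algorithm MV (see context), if all processes are correct and they all propose the same value $v$, then WHP all processes decide $v$.
   Context: System and adversary: a well-known static set $\Pi$ of $n$ processes; an adversary may adaptively corrupt up to $f=(\frac13-\epsilon)n$ processes during a run, where $\frac{1}{2\ln n}<\epsilon<\frac13$. Corrupted (Byzantine) processes may deviate arbitrarily; uncorrupted processes are correct. Once the adversary corrupts a process it cannot replace messages that process already sent while correct. Every pair of processes is connected by a reliable authenticated link; the network is asynchronous. There is a trusted PKI; the adversary is computationally bounded; $\langle v\rangle_i$ denotes $v$ signed by $p_i$. Validated committee sampling: each $p_i$ has a private function $\mathit{sample}_i(s,\lambda)$ returning $\langle v_i,\sigma_i\rangle$ with $v_i\in\{\mathit{true},\mathit{false}\}$ ($p_i$ is ''sampled'' iff $v_i=\mathit{true}$, probability $\lambda/n$) and an unforgeable publicly verifiable proof $\sigma_i$; ''validly sampled $p_j$'' means the message carries a valid such proof. Let $C(s,\lambda)$ be the committee for $s,\lambda$. Parameters: $\lambda=8\ln n$; $\frac1\lambda<d<\frac\epsilon3-\frac1{3\lambda}$; $W=\lceil(\frac23+3d)\lambda\rceil$, $B=\lfloor(\frac13-d)\lambda\rfloor$. Assumed WHP for each committee: (S3) at least $W$ members are correct; (S4) at most $B$ members are Byzantine; (S5) any two $W$-subsets of the committee intersect in at least $B+1$ processes. WHP means with probability tending to $1$ as $n\to\infty$. The binary BA used is a black-box Binary Strong BA WHP: WHP strong unanimity (if all correct processes propose the same bit, any deciding correct process decides it), agreement, and termination. Algorithm MV (code for $p_i$ with input $v_i$; local: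 $\mathit{count}=0$, empty sets $\mathit{init\text{-}set},\mathit{init\text{-}values\text{-}set},\mathit{converge\text{-}set}$): (1) If $p_i$ is sampled for $(\textsc{init},\lambda)$, broadcast $\langle\textsc{init},v_i\rangle_i$. (2) On receiving $\langle\textsc{init},v_j\rangle_j$ from validly sampled $p_j$: add $j$ to $\mathit{init\text{-}set}$, $v_j$ to $\mathit{init\text{-}values\text{-}set}$. If $p_i$ is sampled for $(\textsc{converge},\lambda)$ and $|\mathit{init\text{-}set}|=W$ for the first time: if $\mathit{init\text{-}values\text{-}set}=\{v_i\}$, batch the $W$ signed \textsc{init} messages into $QC_{v_i}$ and send $\langle\textsc{converge},\mathit{true},QC_{v_i}\rangle_i$ to all; else send $\langle\textsc{converge},\mathit{false},\bot\rangle_i$ to all. (3) On receiving $\langle\textsc{converge},\mathit{is\_content},QC_v\rangle_j$ from validly sampled $p_j$: add $j$ to $\mathit{converge\text{-}set}$; if $\mathit{is\_content}=\mathit{true}$ increment $\mathit{count}$. When $|\mathit{converge\text{-}set}|=W$ for the first time: $\mathit{alert}\gets(\mathit{count}<B+1)$; run binary BA on $\mathit{alert}$; if the output is $\mathit{true}$ decide $\bot$; else wait for some $\langle\textsc{converge},\mathit{true},QC_v\rangle_j$ from a validly sampled $p_j$ and decide $v$. A valid $QC_v$ consists of $W$ signed \textsc{init} messages on $v$ from $W$ distinct validly sampled processes. *)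

From HB Require Import structures.
From mathcomp Require Import all_boot all_order all_algebra.
From mathcomp Require Import all_classical all_reals all_analysis.
Set Implicit Arguments. Unset Strict Implicit. Unset Printing Implicit Defensive.
Import Order.TTheory GRing.Theory Num.Theory.

Local Open Scope ring_scope.

Section Params.
Variable R : realType.

Definition lam (n : nat) : R := 8 * ln (n%:R).

Definition Wpar (n : nat) (d : R) : nat := `|Num.ceil ((2/3 + 3 * d) * lam n)|%N.
Definition Bpar (n : nat) (d : R) : nat := `|Num.floor ((1/3 - d) * lam n)|%N.

Definition params_ok (n : nat) (eps d : R) : Prop :=
  1 / (2 * ln (n%:R)) < eps /\ eps < 1/3 /\
  1 / lam n < d /\ d < eps / 3 - 1 / (3 * lam n).
End Params.

(* A complete (infinite) asynchronous run of MV among n processes, all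
   correct.  Only delivery orders matter for the algorithm's behaviour. *)
Record MVRun (V : eqType) (n : nat) := {
  inp  : 'I_n -> V;
  sI   : 'I_n -> bool;         (* p_i sampled for (INIT, lambda) *)
  sC   : 'I_n -> bool;         (* p_i sampled for (CONVERGE, lambda) *)
  rI   : 'I_n -> seq 'I_n;     (* senders of INIT msgs, in p_i's delivery order *)
  rC   : 'I_n -> seq 'I_n;     (* senders of CONVERGE msgs, in p_i's delivery order *)
  baout : 'I_n -> option bool;
  chosen : 'I_n -> 'I_n        (* sender of the CONVERGE-true message p_i waits for *)
}.

Section MVSemantics.
Local Open Scope nat_scope.
Variables (V : eqType) (n : nat) (W B : nat) (r : MVRun V n).

Definition initCommittee : {set 'I_n} := [set j | sI r j].
Definition convCommittee : {set 'I_n} := [set j | sC r j].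

(* is_content of p_j's CONVERGE message: init-values-set = {v_j} at the
   moment |init-set| = W, i.e. the first W INIT messages received carry v_j;
   its QC then certifies v_j. *)
Definition content (j : 'I_n) : bool :=
  all (fun k => inp r k == inp r j) (take W (rI r j)).

Definition convSender (j : 'I_n) : bool := sC r j && (W <= size (rI r j)).

(* p_i reaches |converge-set| = W and hence invokes the binary BA. *)
Definition invokesBA (i : 'I_n) : bool := W <= size (rC r i).

Definition cnt (i : 'I_n) : nat := count content (take W (rC r i)).
Definition alert (i : 'I_n) : bool := cnt i < B.+1.

(* Well-formedness of a fault-free run: reliable, authenticated links deliver
   every message sent exactly once (eventually); p_i waiting for a
   CONVERGE-true message gets one whenever one is sent to it. *)
Definition wf_run : Prop :=
  (forall i, perm_eq (rI r i) [seq j <- enum 'I_n | sI r j]) /\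
  (forall i, perm_eq (rC r i) [seq j <- enum 'I_n | convSender j]) /\
  (forall i, has content (rC r i) ->
       (chosen r i \in rC r i) && content (chosen r i)).

(* The binary strong BA black box behaves correctly in this run
   (all processes are correct). *)
Definition BA_good : Prop :=
  (forall i j b b', invokesBA i -> invokesBA j ->
     baout r i = Some b -> baout r j = Some b' -> b = b') /\
  (forall b, (forall i, invokesBA i /\ alert i = b) ->
     forall i b', invokesBA i -> baout r i = Some b' -> b' = b) /\
  ((forall i, invokesBA i) -> forall i, invokesBA i -> baout r i <> None).

(* Committee assumptions (S3), (S4), (S5) for committee C when all
   processes are correct ((S4) is then vacuous: 0 <= B). *)
Definition committee_ok (C : {set 'I_n}) : Prop :=
  (W <= #|C|)%N /\
  (forall S1 S2 : {set 'I_n}, S1 \subset C -> S2 \subset C ->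
     #|S1| = W -> #|S2| = W -> (B.+1 <= #|S1 :&: S2|)%N).

(* p_i decides x (None stands for bottom). *)
Definition decides (i : 'I_n) (x : option V) : Prop :=
  invokesBA i /\
  ((baout r i = Some true /\ x = None) \/
   (baout r i = Some false /\ chosen r i \in rC r i /\ content (chosen r i) /\
    x = Some (inp r (chosen r i)))).
End MVSemantics.

(* With all inputs equal to v every CONVERGE sender is content, and since
   (S5) applied to one W-subset twice gives B < W, every process counts W > B
   content messages and proposes alert = false.  Strong unanimity and
   termination of the binary BA make everyone output false, so everyone
   waits for a content CONVERGE message, whose QC certifies v.  The three
   WHP assumptions hold simultaneously WHP because a finite intersection of
   events of probability tending to 1 has probability tending to 1. *)
From Pilot Require Import Defs.
From HB Require Import structures.
From mathcomp Require Import all_boot all_order all_algebra.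
From mathcomp Require Import all_classical all_reals all_analysis.
Import Order.TTheory GRing.Theory Num.Theory numFieldNormedType.Exports.
Set Implicit Arguments. Unset Strict Implicit.

Lemma subset_of_card {T : finType} {C : {set T}} {k : nat} : (k <= #|C|)%N ->
  exists S : {set T}, S \subset C /\ #|S| = k.
Proof.
move=> leq_k; exists [set x in take k (enum C)]; split.
  by apply/fintype.subsetP => x; rewrite inE => /mem_take; rewrite mem_enum.
rewrite cardsE; have /card_uniqP -> : uniq (take k (enum C)).
  exact/take_uniq/enum_uniq.
by rewrite size_takel // -cardE.
Qed.

Lemma count_enum (T : finType) (p : pred T) : count p (enum T) = #|p|.
Proof.
rewrite -size_filter cardE; apply/perm_size/uniq_perm.
- exact/filter_uniq/enum_uniq.
- exact: enum_uniq.
- by move=> x; rewrite mem_filter !mem_enum andbT.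
Qed.

Lemma committee_ok_ltn {n W B : nat} {C : {set 'I_n}} :
  committee_ok W B C -> (B < W)%N.
Proof.
move=> [le_WC intersect]; have [S [sub_SC card_S]] := subset_of_card le_WC.
by have := intersect S S sub_SC sub_SC card_S card_S; rewrite finset.setIid card_S.
Qed.

Section UnanimousRun.
Variables (V : eqType) (v : V) (n W B : nat) (r : MVRun V n).
Hypotheses (wf : wf_run W r) (unanimous : forall i, inp r i = v).
Hypotheses (initC : committee_ok W B (initCommittee r))
           (convC : committee_ok W B (convCommittee r)).

Lemma content_unanimous (j : 'I_n) : Defs.content W r j.
Proof. by apply/allP => k _; rewrite !unanimous. Qed.

Lemma size_rI (j : 'I_n) : (W <= size (rI r j))%N.
Proof.
by rewrite (perm_size (wf.1 j)) size_filter count_enum -cardsE; case: initC.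
Qed.

Lemma invokesBA_unanimous (i : 'I_n) : invokesBA W r i.
Proof.
have eq_sender : convSender W r =1 sC r by move=> j; rewrite /convSender size_rI andbT.
rewrite /invokesBA (perm_size (wf.2.1 i)) size_filter (eq_count eq_sender).
by rewrite count_enum -cardsE; case: convC.
Qed.

Lemma alert_unanimous (i : 'I_n) : alert W B r i = false.
Proof.
rewrite /alert /cnt (eq_count (a2 := predT)) => [|k]; last exact: content_unanimous.
rewrite count_predT size_takel; last exact: invokesBA_unanimous.
by rewrite ltnNge (committee_ok_ltn convC).
Qed.

Lemma baout_unanimous : BA_good W B r -> forall i, baout r i = Some false.
Proof.
move=> [_ [unanimity termination]] i.
have all_false k : invokesBA W r k /\ alert W B r k = false.
  by split; [exact: invokesBA_unanimous | exact: alert_unanimous].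
case out_i : (baout r i) => [b|].
  by rewrite (unanimity _ all_false i b (invokesBA_unanimous i) out_i).
by have := termination invokesBA_unanimous i (invokesBA_unanimous i); rewrite out_i.
Qed.

Lemma has_content (i : 'I_n) : has (Defs.content W r) (rC r i).
Proof.
have := invokesBA_unanimous i; rewrite /invokesBA.
case: (rC r i) => [|j s] /=; last by rewrite content_unanimous.
by rewrite leqn0 => /eqP W0; have := committee_ok_ltn convC; rewrite W0.
Qed.

Lemma decides_unanimous : BA_good W B r -> forall i, decides W r i (Some v).
Proof.
move=> ba i; split; first exact: invokesBA_unanimous.
have /andP [chosen_in chosen_content] := wf.2.2 i (has_content i).
by right; split; [exact: baout_unanimous | rewrite unanimous].
Qed.

End UnanimousRun.

Local Open Scope classical_set_scope.
Local Open Scope ring_scope.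

Lemma fine_inclusion_exclusion (R : realDomainType) (x y z : \bar R) :
  x \is a fin_num -> y \is a fin_num -> z \is a fin_num ->
  (x + y - z <= 1)%E -> fine x + fine y - 1 <= fine z.
Proof.
by case: x y z => [x||] [y||] [z||] //= _ _ _; rewrite !lee_fin lerBlDr -lerBlDl.
Qed.

Lemma probabilityI_bounds (R : realType) d (T : measurableType d) (P : probability T R)
  (A B : set T) : measurable A -> measurable B ->
  fine (P A) + fine (P B) - 1 <= fine (P (A `&` B)) <= 1.
Proof.
move=> mA mB; have mAB := measurableI _ _ mA mB.
have finP X : measurable X -> P X \is a fin_num by exact: fin_num_measure.
apply/andP; split.
  apply: fine_inclusion_exclusion; rewrite ?finP //.
  by rewrite -measureUfinl ?ltey_eq ?finP //; exact/probability_le1/measurableU.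
by rewrite -lee_fin fineK ?finP //; exact: probability_le1.
Qed.

Section WithHighProbability.
Variables (R : realType) (disp : measure_display) (Omega : nat -> measurableType disp).
Variable P : forall n, probability (Omega n) R.

Definition whp (E : forall n, set (Omega n)) : Prop :=
  (forall n, measurable (E n)) /\ ((fun n => P n (E n)) @ \oo --> 1%E).

Lemma whpI (A B : forall n, set (Omega n)) :
  whp A -> whp B -> whp (fun n => A n `&` B n).
Proof.
move=> [mA /fine_cvgP [_ PA_to1]] [mB /fine_cvgP [_ PB_to1]].
have mAB n := measurableI _ _ (mA n) (mB n).
split=> //; apply/fine_cvgP; split.
  by apply: nearW => n; exact: fin_num_measure (mAB n).
apply: (@squeeze_cvgr _ _ _ _ (fun n => fine (P n (A n)) + fine (P n (B n)) - 1) (fun=> 1)).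
- by apply: nearW => n; exact: probabilityI_bounds.
- have : (fun n => fine (P n (A n)) + fine (P n (B n)) - 1) @ \oo --> (1 + 1 - 1 : R).
    by apply: cvgB; [exact: cvgD | exact: cvg_cst].
  by rewrite addrK.
- exact: cvg_cst.
Qed.

End WithHighProbability.

Theorem mainTheorem2 (R : realType) (V : eqType) (v : V)
  (eps dd : nat -> R)
  (disp : measure_display) (Omega : nat -> measurableType disp)
  (P : forall n, probability (Omega n) R)
  (run : forall n, Omega n -> MVRun V n) :
  (\forall n \near \oo, params_ok n (eps n) (dd n)) ->
  (* every outcome is a fault-free run of MV in which all processes propose v *)
  (forall n w, wf_run (Wpar n (dd n)) (run n w)) ->
  (forall n w i, inp (run n w) i = v) ->
  (* WHP, the INIT committee satisfies (S3)-(S5) *)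
  (exists G : forall n, set (Omega n), (forall n, measurable (G n)) /\
     ((fun n => P n (G n)) @ \oo --> 1%E) /\
     (forall n w, G n w ->
        committee_ok (Wpar n (dd n)) (Bpar n (dd n)) (initCommittee (run n w)))) ->
  (* WHP, the CONVERGE committee satisfies (S3)-(S5) *)
  (exists G : forall n, set (Omega n), (forall n, measurable (G n)) /\
     ((fun n => P n (G n)) @ \oo --> 1%E) /\
     (forall n w, G n w ->
        committee_ok (Wpar n (dd n)) (Bpar n (dd n)) (convCommittee (run n w)))) ->
  (* WHP, the binary BA satisfies agreement, strong unanimity, termination *)
  (exists G : forall n, set (Omega n), (forall n, measurable (G n)) /\
     ((fun n => P n (G n)) @ \oo --> 1%E) /\
     (forall n w, G n w ->
        BA_good (Wpar n (dd n)) (Bpar n (dd n)) (run n w))) ->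
  (* conclusion: WHP all processes decide v *)
  exists E : forall n, set (Omega n), (forall n, measurable (E n)) /\
     ((fun n => P n (E n)) @ \oo --> 1%E) /\
     (forall n w, E n w -> forall i : 'I_n,
        decides (Wpar n (dd n)) (run n w) i (Some v)).
Proof.
(* The parameter constraints only matter for deriving (S3)-(S5), assumed here. *)
move=> _ wf unanimous [G1 [m1 [c1 init_ok]]] [G2 [m2 [c2 conv_ok]]] [G3 [m3 [c3 ba_ok]]].
have [mE cE] : whp P (fun n => G1 n `&` G2 n `&` G3 n).
  by apply: whpI; [apply: whpI|]; split.
exists (fun n => G1 n `&` G2 n `&` G3 n); split=> //; split=> // n w [[g1 g2] g3].
exact: (decides_unanimous (wf n w) (unanimous n w) (init_ok n w g1) (conv_ok n w g2)
  (ba_ok n w g3)).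
Qed.
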